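(* The post-processed cell averages of the conserved variables satisfy $$\sum_j\overline{\bm U}_j(t+\Delta t)=\sum_j\overline{\bm U}_j^{\,*}.$$
   Context: Consider a 1-D hyperbolic system of conservation laws $\bm U_t+\bm F(\bm U)_x=\bm 0$, together with an equivalent nonconservative (primitive) formulation in variables $\bm V$. There is an invertible transformation $\bm U(\bm V)$ from primitive to conserved variables, with inverse $\bm V(\bm U)$. The numerical solution lives on two overlapping uniform meshes with spacing $\Delta x$. The first mesh has cells $I_j=[x_{j-\frac12},x_{j+\frac12}]$ and carries cell averages $\overline{\bm U}_j$ of the conserved variables. The second, staggered mesh has cells $I_{j+\frac12}=[x_j,x_{j+1}]$ and carries cell averages $\overline{\bm V}_{j+\frac12}$ of the primitive variables. After one time step from $t$ to $t+\Delta t$ by an ODE solver, denote the evolved values by $\overline{\bm U}_j^{\,*}$ and $\overline{\bm V}_{j+\frac12}^{\,*}$. The post-processing is then defined as follows. (1) Set $\bm U_{j+\frac12}^*:=\bm U(\overline{\bm V}_{j+\frac12}^{\,*})$. (2) Compute the slopes $$(\bm U_x)_j^*=2\,\mathrm{minmod}\Big(\frac{\overline{\bm U}_j^{\,*}-\bm U_{j-\frac12}^*}{\Delta x},\frac{\bm U_{j+\frac12}^*-\overline{\bm U}_j^{\,*}}{\Delta x}\Big),$$ where minmod is applied componentwise. It returns the minimum of its arguments if all are positive, the maximum if all are negative, and $0$ otherwise. Then define $$\bm U_{j+\frac12}^{*,-}:=\overline{\bm U}_j^{\,*}+\frac{\Delta x}{2}(\bm U_x)_j^*,\qquad \bm U_{j+\frac12}^{*,+}:=\overline{\bm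 U}_{j+1}^{\,*}-\frac{\Delta x}{2}(\bm U_x)_{j+1}^*.$$ (3) Set $\bm U_{j+\frac12}^{**}:=\frac12\big(\bm U_{j+\frac12}^{*,-}+\bm U_{j+\frac12}^{*,+}\big)$ and $\overline{\bm V}_{j+\frac12}(t+\Delta t)=\bm V(\bm U_{j+\frac12}^{**})$. (4) Set $\overline{\bm U}_j(t+\Delta t)=\frac12\big(\bm U_{j-\frac12}^{**}+\bm U_{j+\frac12}^{**}\big)$. Sums are over all cells, and it is assumed that there are no contributions from boundary terms (e.g. periodic or compactly supported data). *)

From HB Require Import structures.
From mathcomp Require Import all_boot all_order all_algebra.
Set Implicit Arguments. Unset Strict Implicit. Unset Printing Implicit Defensive.
Import Order.TTheory GRing.Theory Num.Theory.
Local Open Scope ring_scope.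

Definition minmod2 {R : realFieldType} (a b : R) : R :=
  if (0 < a) && (0 < b) then Num.min a b
  else if (a < 0) && (b < 0) then Num.max a b
  else 0.

Definition minmodv {R : realFieldType} {m : nat} (a b : 'rV[R]_m) : 'rV[R]_m :=
  \row_k minmod2 (a 0 k) (b 0 k).

(* Indexing conventions (cells indexed by integers):
   Ustar j  = \overline{U}_j^*          (cell I_j)
   Vstar j  = \overline{V}_{j+1/2}^*    (staggered cell I_{j+1/2})
   Uof : primitive -> conserved,  Vof : conserved -> primitive. *)
Section PostProcessing.
Variables (R : realFieldType) (m : nat).
Variables (Uof Vof : 'rV[R]_m -> 'rV[R]_m) (dx : R).
Variables (Ustar Vstar : int -> 'rV[R]_m).

Definition Uhalf (j : int) : 'rV[R]_m := Uof (Vstar j).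

Definition slope (j : int) : 'rV[R]_m :=
  2%:R *: minmodv (dx^-1 *: (Ustar j - Uhalf (j - 1)))
                  (dx^-1 *: (Uhalf j - Ustar j)).

Definition Uminus (j : int) : 'rV[R]_m := Ustar j + (dx / 2%:R) *: slope j.
Definition Uplus (j : int) : 'rV[R]_m :=
  Ustar (j + 1) - (dx / 2%:R) *: slope (j + 1).

Definition Ustarstar (j : int) : 'rV[R]_m := 2%:R^-1 *: (Uminus j + Uplus j).
Definition Vnew (j : int) : 'rV[R]_m := Vof (Ustarstar j).

Definition Unew (j : int) : 'rV[R]_m :=
  2%:R^-1 *: (Ustarstar (j - 1) + Ustarstar j).
End PostProcessing.

From Pilot Require Import Defs.
From HB Require Import structures.
From mathcomp Require Import all_boot all_order all_algebra.
Set Implicit Arguments. Unset Strict Implicit. Unset Printing Implicit Defensive.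
Import Order.TTheory GRing.Theory Num.Theory.
Local Open Scope ring_scope.

(* Over one period, the sum of the reconstructed interface values
   U^{*,-}_{j+1/2} + U^{*,+}_{j+1/2} is twice the sum of the cell averages,
   because the slope corrections telescope; averaging U^{**} over two
   neighbouring interfaces is again a shift-invariant operation. Neither the
   minmod limiter nor the relation between U and V plays any role. *)

Definition periodic (T : Type) (n : nat) (f : int -> T) :=
  forall j : int, f (j + n%:Z) = f j.

Section PeriodicSums.
Variables (M : zmodType) (n : nat) (f : int -> M).
Hypothesis f_periodic : periodic n f.

Lemma periodic_shift (k : int) : periodic n (fun j => f (j + k)).
Proof. by move=> j; rewrite addrAC f_periodic. Qed.

Lemma sum_periodic_addr1 :
  \sum_(0 <= j < n) f (j%:Z + 1) = \sum_(0 <= j < n) f j%:Z.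
Proof.
case: n f_periodic => [|k] f_per; first by rewrite !big_geq.
rewrite big_nat_recr //= big_nat_recl //= addrC.
have natS (i : nat) : i%:Z + 1 = i.+1%:Z by rewrite -addn1 PoszD.
rewrite natS -[k.+1%:Z]add0r f_per.
by congr (_ + _); apply: eq_bigr => i _; rewrite natS.
Qed.

End PeriodicSums.

Lemma sum_periodic_subr1 (M : zmodType) (n : nat) (f : int -> M) :
  periodic n f ->
  \sum_(0 <= j < n) f (j%:Z - 1) = \sum_(0 <= j < n) f j%:Z.
Proof.
move=> f_per; rewrite -(sum_periodic_addr1 (periodic_shift f_per (-1))).
by apply: eq_bigr => i _; rewrite addrK.
Qed.

Lemma sum_mean_prev (R : fieldType) (V : lmodType R) (n : nat) (f : int -> V) :
  2%:R != 0 :> R -> periodic n f ->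
  \sum_(0 <= j < n) 2%:R^-1 *: (f (j%:Z - 1) + f j%:Z) = \sum_(0 <= j < n) f j%:Z.
Proof.
move=> two_neq0 f_per.
rewrite -scaler_sumr big_split /= sum_periodic_subr1 // -mulr2n -scaler_nat.
by rewrite scalerA mulVf // scale1r.
Qed.

Section PostProcessingConservation.
Variables (R : realFieldType) (m n : nat).
Variables (Uof : 'rV[R]_m -> 'rV[R]_m) (dx : R).
Variables (Ustar Vstar : int -> 'rV[R]_m).
Hypotheses (Ustar_periodic : periodic n Ustar) (Vstar_periodic : periodic n Vstar).

Local Notation Uhalf := (Uhalf Uof Vstar).
Local Notation slope := (slope Uof dx Ustar Vstar).
Local Notation Uminus := (Uminus Uof dx Ustar Vstar).
Local Notation Uplus := (Uplus Uof dx Ustar Vstar).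
Local Notation Ustarstar := (Ustarstar Uof dx Ustar Vstar).
Local Notation Unew := (Unew Uof dx Ustar Vstar).

Lemma two_neq0 : 2%:R != 0 :> R.
Proof. by rewrite pnatr_eq0. Qed.

Lemma Uhalf_periodic : periodic n Uhalf.
Proof. by move=> j; rewrite /Defs.Uhalf Vstar_periodic. Qed.

Lemma slope_periodic : periodic n slope.
Proof.
by move=> j; rewrite /Defs.slope Ustar_periodic addrAC !Uhalf_periodic.
Qed.

Lemma Ustarstar_periodic : periodic n Ustarstar.
Proof.
move=> j; rewrite /Defs.Ustarstar /Defs.Uminus /Defs.Uplus [j + _ + 1]addrAC.
by rewrite !Ustar_periodic !slope_periodic.
Qed.

Lemma sum_Uminus_Uplus :
  \sum_(0 <= j < n) (Uminus j%:Z + Uplus j%:Z) = 2%:R *: \sum_(0 <= j < n) Ustar j%:Z.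
Proof.
rewrite /Defs.Uminus /Defs.Uplus !big_split /= sumrN -!(scaler_sumr (dx / 2%:R)).
rewrite sum_periodic_addr1 // (sum_periodic_addr1 slope_periodic).
by rewrite addrACA subrr addr0 scaler_nat mulr2n.
Qed.

Lemma sum_Ustarstar :
  \sum_(0 <= j < n) Ustarstar j%:Z = \sum_(0 <= j < n) Ustar j%:Z.
Proof.
rewrite /Defs.Ustarstar -scaler_sumr sum_Uminus_Uplus scalerA.
by rewrite mulVf ?two_neq0 // scale1r.
Qed.

Lemma sum_Unew : \sum_(0 <= j < n) Unew j%:Z = \sum_(0 <= j < n) Ustar j%:Z.
Proof.
rewrite -sum_Ustarstar -(sum_mean_prev two_neq0 Ustarstar_periodic).
by apply: eq_bigr.
Qed.

End PostProcessingConservation.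

Theorem mainTheorem1 (R : realFieldType) (m n : nat)
  (Uof Vof : 'rV[R]_m -> 'rV[R]_m) (dx : R)
  (Ustar Vstar : int -> 'rV[R]_m)
  (hn : (0 < n)%N) (hdx : 0 < dx)
  (hUV : cancel Vof Uof) (hVU : cancel Uof Vof)
  (perU : forall j : int, Ustar (j + n%:Z) = Ustar j)
  (perV : forall j : int, Vstar (j + n%:Z) = Vstar j) :
  \sum_(0 <= j < n) Unew Uof dx Ustar Vstar j%:Z
  = \sum_(0 <= j < n) Ustar j%:Z.
Proof. exact: sum_Unew. Qed.
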